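(* Let $n\ge1$ and $\nu,\rho\vdash n$. Then \[ LP^n_{\nu,\rho}=\sum_{\lambda,\mu\vdash n}\overline R_{\lambda,\nu}\,\overline R_{\mu,\rho}\,L^n_{\lambda,\mu}, \] where only partitions $\lambda$ refining $\nu$ and $\mu$ refining $\rho$ contribute.
   Context: Work on the set $[n]\cup[\hat n]=\{1,\dots,n,\hat1,\dots,\hat n\}$; permutations are composed right to left, and a pairing is a fixed-point-free involution of this set. Let $f_1=(1\,\hat n)(2\,\hat1)(3\,\hat2)\cdots(n\,\widehat{n-1})$ and $f_2=(1\,\hat1)(2\,\hat2)\cdots(n\,\hat n)$. For a partition $\lambda$, $\lambda\lambda$ denotes the partition with parts $\lambda_1,\lambda_1,\lambda_2,\lambda_2,\dots$ and $\mathcal C_{\lambda\lambda}$ the set of permutations of $[n]\cup[\hat n]$ of cycle type $\lambda\lambda$. $L^n_{\lambda,\mu}$ is the number of pairings $f_3$ with $f_3\circ f_1\in\mathcal C_{\lambda\lambda}$ and $f_3\circ f_2\in\mathcal C_{\mu\mu}$. A set partition of $[n]\cup[\hat n]$ with all blocks of even size has half-type $\lambda$ if its block sizes are $2\lambda_1,2\lambda_2,\dots$; it is stable by a permutation $f$ if $f$ maps each block onto itself. $LP^n_{\lambda,\mu}$ is the number of triples $(f_3,\pi_1,\pi_2)$ where $f_3$ is a pairing, $\pi_1,\pi_2$ are set partitions of $[n]\cup[\hat n]$ with blocks of even size, of half-types $\lambda$ and $\mu$ respectively, $\pi_1$ is stable by $f_1$ and $f_3$, and $\pi_2$ is stable by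 $f_2$ and $f_3$. For partitions $\lambda,\nu\vdash n$, $\overline R_{\lambda,\nu}$ is the number of (unordered) set partitions $\{B_1,\dots,B_{\ell(\nu)}\}$ of $\{1,\dots,\ell(\lambda)\}$ such that the multiset of block sums $\{\sum_{i\in B_j}\lambda_i\}_j$ equals the multiset of parts of $\nu$. *)

From mathcomp Require Import all_boot all_fingroup.
Set Implicit Arguments. Unset Strict Implicit. Unset Printing Implicit Defensive.

(* Ground set [n] u [^n]: inl i stands for i+1, inr i for hat(i+1) (0-based ordinals). *)
Definition ground (n : nat) : finType := ('I_n + 'I_n)%type.

Definition is_partition (n : nat) (l : seq nat) : bool :=
  [&& sorted geq l, all (fun x => 0 < x) l & sumn l == n].

Fixpoint seqs_upto (k m : nat) : seq (seq nat) :=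
  if k is k'.+1 then
    [::] :: [seq x :: s | x <- iota 1 m, s <- seqs_upto k' m]
  else [:: [::]].

Definition partitions (n : nat) : seq (seq nat) :=
  [seq l <- seqs_upto n n | is_partition n l].

Definition dbl (l : seq nat) : seq nat := flatten [seq [:: x; x] | x <- l].

Definition cycle_type (T : finType) (s : {perm T}) : seq nat :=
  [seq #|C| | C : {set T} <- enum (porbits s)].

Definition in_class (T : finType) (ll : seq nat) (s : {perm T}) : bool :=
  perm_eq (cycle_type s) ll.

Definition is_pairing (T : finType) (f : {perm T}) : bool :=
  [forall x, (f (f x) == x) && (f x != x)].

(* f1 = (1 n^)(2 1^)(3 2^)...(n (n-1)^) *)
Definition f1_fun n (x : ground n) : ground n :=
  match x with inl i => inr (ord_pred i) | inr j => inl (ordS j) end.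
Lemma f1_inj n : injective (@f1_fun n).
Proof.
have K : cancel (@f1_fun n) (@f1_fun n).
  by case=> i /=; rewrite ?ord_predK ?ordSK.
exact: can_inj K.
Qed.
Definition f1 n : {perm ground n} := perm (@f1_inj n).

Definition f2_fun n (x : ground n) : ground n :=
  match x with inl i => inr i | inr j => inl j end.
Lemma f2_inj n : injective (@f2_fun n).
Proof.
have K : cancel (@f2_fun n) (@f2_fun n) by case.
exact: can_inj K.
Qed.
Definition f2 n : {perm ground n} := perm (@f2_inj n).

(* Composition f3 o f1 (apply f1 first) is, in mathcomp's {perm} group, f1 * f3
   since (s * t) x = t (s x). *)
Definition L (n : nat) (lam mu : seq nat) : nat :=
  #|[set f3 : {perm ground n} | [&& is_pairing f3,
       in_class (dbl lam) (f1 n * f3)%g & in_class (dbl mu) (f2 n * f3)%g]]|.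

Definition even_setpart_halftype (T : finType) (lam : seq nat) (P : {set {set T}}) : bool :=
  [&& partition P [set: T], [forall B in P, ~~ odd #|B|] &
      perm_eq [seq #|B| %/ 2 | B : {set T} <- enum P] lam].

Definition stable_by (T : finType) (f : {perm T}) (P : {set {set T}}) : bool :=
  [forall B in P, f @: B == B].

Definition LP (n : nat) (nu rho : seq nat) : nat :=
  #|[set t : {perm ground n} * {set {set ground n}} * {set {set ground n}} |
      let: (f3, p1, p2) := t in
      [&& is_pairing f3,
          even_setpart_halftype nu p1, even_setpart_halftype rho p2,
          stable_by (f1 n) p1, stable_by f3 p1,
          stable_by (f2 n) p2 & stable_by f3 p2]]|.

Definition Rbar (lam nu : seq nat) : nat :=
  #|[set Q : {set {set 'I_(size lam)}} |
      partition Q [set: 'I_(size lam)] &&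
      perm_eq [seq (\sum_(i in B) nth 0 lam i)%N | B : {set 'I_(size lam)} <- enum Q] nu]|.

From mathcomp Require Import all_boot all_fingroup.
Set Implicit Arguments. Unset Strict Implicit. Unset Printing Implicit Defensive.

(* For pairings f and h, f conjugates g := f h to its inverse, so f maps each
   g-cycle onto a different g-cycle of the same length.  The unions of these
   pairs of cycles ("atoms") partition the ground set, and g has cycle type
   lambda lambda where lambda lists the half-sizes of the atoms.  A set
   partition is stable by f and h iff every atom lies in one of its blocks,
   so those of half-type nu correspond to the set partitions of the atoms
   whose half-size sums give nu: there are Rbar lambda nu of them.  Hence
   LP = sum over pairings f3 of Rbar(lambda(f1, f3), nu) Rbar(lambda(f2, f3), rho),
   and grouping the f3 by (lambda, mu) gives the formula. *)

Lemma pairingK (T : finType) (s : {perm T}) : is_pairing s -> involutive s.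
Proof. by move/forallP=> ps x; case/andP: (ps x) => /eqP. Qed.

Lemma pairing_neq (T : finType) (s : {perm T}) x : is_pairing s -> s x != x.
Proof. by move/forallP/(_ x)/andP=> []. Qed.

Lemma porbit_eq (T : finType) (s : {perm T}) x y :
  y \in porbit s x -> porbit s y = porbit s x.
Proof. by rewrite -eq_porbit_mem => /eqP. Qed.

Lemma porbit_sub (T : finType) (s : {perm T}) (B : {set T}) x :
  {in B, forall y, s y \in B} -> x \in B -> porbit s x \subset B.
Proof.
move=> sB xB; apply/subsetP=> _ /porbitP[i ->].
by elim: i => [|i IHi]; rewrite ?expg0 ?perm1 // expgSr permM sB.
Qed.

Lemma stable_byP (T : finType) (s : {perm T}) (P : {set {set T}}) :
  reflect {in P, forall B : {set T}, {in B, forall x, s x \in B}} (stable_by s P).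
Proof.
apply: (iffP forallP) => [sP B BP x xB | sP B].
  by move/implyP/(_ BP)/eqP: (sP B) => <-; apply: imset_f.
apply/implyP=> BP; rewrite eqEcard card_imset ?leqnn ?andbT; last exact: perm_inj.
by apply/subsetP=> _ /imsetP[x xB ->]; apply: sP.
Qed.

Definition refines (T : finType) (A P : {set {set T}}) :=
  [forall a in A, [exists B in P, a \subset B]].

Lemma refinesP (T : finType) (A P : {set {set T}}) :
  reflect {in A, forall a : {set T}, exists2 B, B \in P & a \subset B} (refines A P).
Proof.
apply: (iffP forallP) => [rAP a aA | rAP a]; last first.
  by apply/implyP=> /rAP[B BP aB]; apply/existsP; exists B; rewrite BP.
by move/implyP/(_ aA)/existsP: (rAP a) => [B /andP[BP aB]]; exists B.
Qed.

Lemma perm_enum_imset (aT rT : finType) (F : aT -> rT) (A : {set aT}) :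
  injective F -> perm_eq (enum (F @: A)) (map F (enum A)).
Proof.
move=> Finj; apply: uniq_perm; rewrite ?enum_uniq ?map_inj_uniq ?enum_uniq //.
move=> y; rewrite mem_enum; apply/imsetP/mapP => -[x xA ->];
  by exists x; rewrite ?mem_enum in xA *.
Qed.

Section Gluing.
Variables (T : finType) (k : nat) (e : 'I_k -> {set T}).
Hypotheses (e_inj : injective e) (e_part : partition [set e i | i : 'I_k] [set: T]).

Lemma mem_e i : e i \in [set e j | j : 'I_k].
Proof. exact: imset_f. Qed.

Lemma mem_e_inj i j x : x \in e i -> x \in e j -> i = j.
Proof.
move=> xi xj; apply: e_inj; apply: contraTeq isT => neq_ij.
have := trivIsetP (partition_trivIset e_part) _ _ (mem_e i) (mem_e j) neq_ij.
by move/disjointFr/(_ xi); rewrite xj.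
Qed.

Definition glue (B : {set 'I_k}) := \bigcup_(i in B) e i.
Definition unglue (C : {set T}) := [set i | e i \subset C].

Lemma glueK : cancel glue unglue.
Proof.
move=> B; apply/setP=> i; rewrite inE; apply/idP/idP => [|iB]; last exact: bigcup_sup.
have /set0Pn[x xi] := partition_neq0 e_part (mem_e i).
by move/subsetP/(_ x xi)/bigcupP=> [j jB xj]; rewrite (mem_e_inj xi xj).
Qed.

Lemma glue_inj : injective glue. Proof. exact: can_inj glueK. Qed.

Lemma glue0 : glue set0 = set0. Proof. exact: big_set0. Qed.

Lemma glueT : glue [set: 'I_k] = [set: T].
Proof.
by rewrite -(cover_partition e_part) cover_imset; apply: eq_bigl => i; rewrite inE.
Qed.

Lemma glueI B C : glue (B :&: C) = glue B :&: glue C.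
Proof.
apply/setP=> x; rewrite inE; apply/bigcupP/andP => [[i /setIP[iB iC] xi] | ].
  by split; apply/bigcupP; exists i.
case=> /bigcupP[i iB xi] /bigcupP[j jC xj].
by exists i; rewrite // inE iB (mem_e_inj xi xj).
Qed.

Lemma cover_glue (Q : {set {set 'I_k}}) : cover (glue @: Q) = glue (cover Q).
Proof.
rewrite cover_imset; apply/setP=> x.
apply/bigcupP/bigcupP => [[B BQ /bigcupP[i iB xi]] | [i /bigcupP[B BQ iB] xi]].
  by exists i; first by apply/bigcupP; exists B.
by exists B; last by apply/bigcupP; exists i.
Qed.

Lemma glue_disjoint B C : [disjoint glue B & glue C] = [disjoint B & C].
Proof. by rewrite -!setI_eq0 -glueI -glue0 (inj_eq glue_inj). Qed.

Lemma partition_glue (Q : {set {set 'I_k}}) D :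
  partition (glue @: Q) (glue D) = partition Q D.
Proof.
rewrite /partition cover_glue (inj_eq glue_inj) -glue0 (mem_imset _ _ glue_inj).
congr [&& _, _ & _]; apply/trivIsetP/trivIsetP => [tQ B C BQ CQ | tQ].
  by rewrite -glue_disjoint -(inj_eq glue_inj); apply: tQ; apply: imset_f.
move=> _ _ /imsetP[B BQ ->] /imsetP[C CQ ->].
by rewrite glue_disjoint (inj_eq glue_inj); apply: tQ.
Qed.

Lemma card_glue B : #|glue B| = \sum_(i in B) #|e i|.
Proof.
have tB : trivIset (e @: B).
  apply: trivIsetS (partition_trivIset e_part).
  by apply/subsetP=> _ /imsetP[i _ ->]; apply: imset_f.
by rewrite /glue -cover_imset -(eqP tB) big_imset //= => i j _ _; apply: e_inj.
Qed.

Lemma unglueK (P : {set {set T}}) : partition P [set: T] ->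
  refines [set e i | i : 'I_k] P -> {in P, cancel unglue glue}.
Proof.
move=> Ppart /refinesP eP C CP; apply/eqP; rewrite eqEsubset.
apply/andP; split; first by apply/bigcupsP=> i; rewrite inE.
apply/subsetP=> x xC.
have : x \in cover [set e i | i : 'I_k] by rewrite (cover_partition e_part).
case/bigcupP=> _ /imsetP[i _ ->] xi.
have [B BP eiB] := eP _ (mem_e i).
have BC : B = C.
  have tP := partition_trivIset Ppart.
  by rewrite -(def_pblock tP BP (subsetP eiB x xi)) (def_pblock tP CP xC).
by apply/bigcupP; exists i; rewrite // inE -BC.
Qed.

Lemma refines_glue (Q : {set {set 'I_k}}) :
  partition Q [set: 'I_k] -> refines [set e i | i : 'I_k] (glue @: Q).
Proof.
move=> Qpart; apply/refinesP=> _ /imsetP[i _ ->].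
have : i \in cover Q by rewrite (cover_partition Qpart).
by case/bigcupP=> B BQ iB; exists (glue B); [apply: imset_f | apply: bigcup_sup].
Qed.

End Gluing.

Lemma card_even_coarsenings_indexed (T : finType) (lam nu : seq nat)
    (e : 'I_(size lam) -> {set T}) :
  injective e -> partition [set e i | i : 'I_(size lam)] [set: T] ->
  (forall i, #|e i| = (nth 0 lam i).*2) ->
  #|[set P : {set {set T}} | even_setpart_halftype nu P &&
                             refines [set e i | i : 'I_(size lam)] P]| = Rbar lam nu.
Proof.
move=> e_inj e_part card_e.
have card_glue2 B : #|glue e B| = (\sum_(i in B) nth 0 lam i).*2.
  rewrite card_glue // -muln2 big_distrl /=.
  by apply: eq_bigr => i _; rewrite card_e muln2.
have halftype_glue (Q : {set {set 'I_(size lam)}}) :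
    perm_eq [seq #|X| %/ 2 | X : {set T} <- enum (glue e @: Q)]
            [seq \sum_(i in B) nth 0 lam i | B : {set 'I_(size lam)} <- enum Q].
  have := perm_enum_imset Q (glue_inj e_inj e_part).
  move/(perm_map (fun X : {set T} => #|X| %/ 2))/perm_trans; apply.
  rewrite -map_comp; under eq_map => B do rewrite /= card_glue2 divn2 doubleK.
  exact: perm_refl.
rewrite /Rbar -(card_imset _ (imset_inj (glue_inj e_inj e_part))).
apply: eq_card => P; rewrite inE.
apply/andP/imsetP => [[/and3P[Ppart _ Phalf] rP] | [Q]].
  have PE : P = glue e @: (unglue e @: P).
    rewrite -imset_comp -[LHS]imset_id.
    by apply: eq_in_imset => C CP; rewrite /= (unglueK e_part Ppart).
  exists (unglue e @: P); last exact: PE.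
  rewrite inE -(partition_glue e_inj e_part) (glueT e_part) -PE Ppart /=.
  by have := halftype_glue (unglue e @: P); rewrite -PE perm_sym => /perm_trans; apply.
rewrite inE => /andP[Qpart Qhalf] ->; split; last exact: refines_glue.
apply/and3P; split.
- by rewrite -(glueT e_part) partition_glue.
- by apply/forallP=> X; apply/implyP=> /imsetP[B _ ->]; rewrite card_glue2 odd_double.
- exact: perm_trans (halftype_glue Q) Qhalf.
Qed.

Lemma card_even_coarsenings (T : finType) (A : {set {set T}}) (lam nu : seq nat) :
  partition A [set: T] -> {in A, forall a : {set T}, ~~ odd #|a|} ->
  perm_eq lam [seq #|a| %/ 2 | a : {set T} <- enum A] ->
  #|[set P : {set {set T}} | even_setpart_halftype nu P && refines A P]| = Rbar lam nu.
Proof.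
move=> Apart Aeven /(perm_iotaP 0)[Is Is_iota lamE].
have size_Is : size Is = size lam by rewrite lamE size_map.
have size_enumA : size (enum A) = #|A| by rewrite cardE.
have Is_lt j : j < size lam -> nth 0 Is j < #|A|.
  move=> lt_j; have : nth 0 Is j \in Is by rewrite mem_nth ?size_Is.
  by rewrite (perm_mem Is_iota) mem_iota size_map size_enumA.
pose e (i : 'I_(size lam)) := nth set0 (enum A) (nth 0 Is i).
have e_inj : injective e.
  move=> i j /eqP; rewrite /e nth_uniq ?enum_uniq ?size_enumA ?Is_lt //.
  by rewrite nth_uniq ?size_Is ?(perm_uniq Is_iota) ?iota_uniq // => /eqP/ord_inj.
have eA : [set e i | i : 'I_(size lam)] = A.
  have size_lam : size lam = #|A|.
    by rewrite -size_Is (perm_size Is_iota) size_iota size_map size_enumA.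
  apply/eqP; rewrite eqEcard card_imset // card_ord [X in _ <= X]size_lam leqnn andbT.
  by apply/subsetP=> _ /imsetP[i _ ->]; rewrite -mem_enum mem_nth ?size_enumA ?Is_lt.
have e_mem i : e i \in A by rewrite -eA imset_f.
have lam_nth j : j < size lam -> nth 0 lam j = #|nth set0 (enum A) (nth 0 Is j)| %/ 2.
  by move=> lt_j; rewrite lamE (nth_map 0) ?size_Is // (nth_map set0) ?size_enumA ?Is_lt.
rewrite -eA card_even_coarsenings_indexed // ?eA // => i.
rewrite lam_nth // -/(e i) divn2.
by rewrite -[LHS](odd_double_half #|e i|) (negbTE (Aeven _ (e_mem i))).
Qed.

Lemma geq_trans : transitive geq.
Proof. by move=> y x z /= yx zy; apply: leq_trans yx. Qed.

Lemma geq_anti : antisymmetric geq.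
Proof. by move=> x y /andP[yx xy]; apply/eqP; rewrite eqn_leq; apply/andP. Qed.

Lemma geq_total : total geq.
Proof. by move=> x y; rewrite /= orbC leq_total. Qed.

Lemma count_dbl (p : pred nat) s : count p (dbl s) = (count p s).*2.
Proof. by elim: s => //= x s ->; case: (p x); rewrite /= ?doubleS. Qed.

Section PairingProduct.
Variables (T : finType) (f h : {perm T}).
Hypotheses (pf : is_pairing f) (ph : is_pairing h).
Local Notation g := (f * h)%g.

Lemma pairing_conj x : f (g x) = (g^-1)%g (f x).
Proof.
by apply: (@perm_inj _ g); rewrite permKV !permM !(pairingK pf) (pairingK ph).
Qed.

Lemma pairing_conjX i x : f ((g ^+ i)%g x) = ((g^-1) ^+ i)%g (f x).
Proof.
elim: i => [|i IHi]; first by rewrite !expg0 !perm1.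
by rewrite !expgSr permM pairing_conj IHi permM.
Qed.

Lemma mem_porbit_pairing x y : y \in porbit g x -> f y \in porbit g (f x).
Proof. by case/porbitP=> i ->; rewrite pairing_conjX -porbitV mem_porbit. Qed.

Lemma pairing_porbit x : f @: porbit g x = porbit g (f x).
Proof.
apply/eqP; rewrite eqEsubset; apply/andP; split.
  by apply/subsetP=> _ /imsetP[y yx ->]; exact: mem_porbit_pairing.
apply/subsetP=> y /mem_porbit_pairing; rewrite (pairingK pf) => fy.
by rewrite -[y](pairingK pf) imset_f.
Qed.

Lemma card_porbit_pairing x : #|porbit g (f x)| = #|porbit g x|.
Proof. by rewrite -pairing_porbit card_imset //; exact: perm_inj. Qed.

(* If f x = g^k x, then y := g^(k/2) x satisfies f y = y (k even) or
   h (f y) = f y (k odd). *)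
Lemma pairing_notin_porbit x : f x \notin porbit g x.
Proof.
apply/porbitP=> -[k fx]; set m := k./2; set y := (g ^+ m)%g x.
have k_eq : k = odd k + m + m by rewrite -addnA addnn odd_double_half.
have fy : f y = (g ^+ (odd k + m))%g x.
  by rewrite pairing_conjX fx {1}k_eq expgD expgVn permM permK.
case: (odd k) fy => /= fy.
- move: (pairing_neq (f y) ph).
  by rewrite -(permM f h) fy add1n expgSr (permM _ g) eqxx.
- by move: (pairing_neq y pf); rewrite fy add0n eqxx.
Qed.

Lemma porbit_pairing_neq x : porbit g (f x) != porbit g x.
Proof. by rewrite eq_porbit_mem pairing_notin_porbit. Qed.

Definition atom x := porbit g x :|: porbit g (f x).
Definition atoms := [set atom x | x : T].

Lemma atom_id x : x \in atom x. Proof. by rewrite inE porbit_id. Qed.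
Lemma atom_pairing x : f x \in atom x. Proof. by rewrite inE porbit_id orbT. Qed.

Lemma atom_eq x y : y \in atom x -> atom y = atom x.
Proof.
rewrite /atom; case/setUP=> yx.
  by rewrite (porbit_eq yx) (porbit_eq (mem_porbit_pairing yx)).
have := mem_porbit_pairing yx; rewrite (pairingK pf) => fyx.
by rewrite (porbit_eq yx) (porbit_eq fyx) setUC.
Qed.

Lemma card_atom x : #|atom x| = (#|porbit g x|).*2.
Proof.
rewrite cardsU card_porbit_pairing.
have -> : porbit g x :&: porbit g (f x) = set0.
  apply/setP=> z; rewrite !inE; apply/negbTE/andP=> -[zx zfx].
  by move: (porbit_pairing_neq x); rewrite -(porbit_eq zx) -(porbit_eq zfx) eqxx.
by rewrite cards0 subn0 addnn.
Qed.

Lemma half_card_atom x : #|atom x| %/ 2 = #|porbit g x|.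
Proof. by rewrite card_atom divn2 doubleK. Qed.

Lemma partition_atoms : partition atoms [set: T].
Proof.
apply/and3P; split.
- apply/eqP/setP=> x; rewrite inE; apply/bigcupP.
  by exists (atom x); [exact: imset_f | exact: atom_id].
- apply/trivIsetP=> _ _ /imsetP[x _ ->] /imsetP[y _ ->] neq_xy.
  rewrite -setI_eq0; apply/eqP/setP=> z; rewrite [in RHS]inE.
  apply/negbTE/setIP=> -[zx zy].
  by move: neq_xy; rewrite -(atom_eq zx) -(atom_eq zy) eqxx.
- by apply/imsetP=> -[x _ x0]; move: (atom_id x); rewrite -x0 inE.
Qed.

Lemma stable_pairings_refines (P : {set {set T}}) : partition P [set: T] ->
  (stable_by f P && stable_by h P) = refines atoms P.
Proof.
move=> Ppart; have tP := partition_trivIset Ppart.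
have xP x : x \in cover P by rewrite (cover_partition Ppart) inE.
apply/andP/refinesP => [[/stable_byP sf /stable_byP sh] _ /imsetP[x _ ->] | rP].
  have BP := pblock_mem (xP x); have xB : x \in pblock P x by rewrite mem_pblock.
  have sg : {in pblock P x, forall y, g y \in pblock P x}.
    by move=> y yB; rewrite permM sh ?sf.
  exists (pblock P x) => //.
  by rewrite subUset (porbit_sub sg xB) (porbit_sub sg (sf _ BP _ xB)).
have atom_sub B x : B \in P -> x \in B -> atom x \subset B.
  move=> BP xB; have [|B' B'P xB'] := rP (atom x); first exact: imset_f.
  by rewrite -(def_pblock tP BP xB) (def_pblock tP B'P (subsetP xB' _ (atom_id x))).
split; apply/stable_byP=> B BP x xB; apply: (subsetP (atom_sub B x BP xB)).
  exact: atom_pairing.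
rewrite -[x in h x](pairingK pf) -permM inE; apply/orP; right.
by apply/porbitP; exists 1; rewrite expg1.
Qed.

Lemma porbits_in_atom x :
  [set C in porbits g | C :|: f @: C == atom x] = [set porbit g x; porbit g (f x)].
Proof.
apply/setP=> C; rewrite !inE; apply/andP/orP => [[/imsetP[y _ ->]] | ].
  rewrite pairing_porbit -/(atom y) => /eqP yx.
  move: (atom_id y); rewrite yx => /setUP[] /porbit_eq->; by [left | right].
case=> /eqP->; rewrite imset_f // pairing_porbit //.
by rewrite (pairingK pf) /atom setUC.
Qed.

Lemma count_cycle_type (p : pred nat) :
  count p (cycle_type g) = (count p [seq #|a| %/ 2 | a : {set T} <- enum atoms]).*2.
Proof.
rewrite /cycle_type !count_map -!sum1_count !big_enum_cond /=.
rewrite (partition_big (fun C => C :|: f @: C) (mem atoms)); last first.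
  by move=> C /andP[/imsetP[x _ ->] _]; rewrite pairing_porbit; apply: imset_f.
rewrite -muln2 big_distrl /= [RHS]big_mkcondr /=; apply: eq_bigr => _ /imsetP[x _ ->].
set S := [set porbit g x; porbit g (f x)].
have cardS : {in S, forall C : {set T}, #|C| = #|atom x| %/ 2}.
  by move=> C /set2P[]->; rewrite half_card_atom ?card_porbit_pairing.
rewrite (eq_bigl (fun C => (C \in S) && p (#|atom x| %/ 2))); last first.
  move=> C; have memS : (C \in S) = (C \in porbits g) && (C :|: f @: C == atom x).
    by rewrite /S -porbits_in_atom inE.
  by rewrite andbAC -memS; case: (boolP (C \in S)) => // CS; rewrite cardS.
case: (p _); last by rewrite big_mkcond big1 // => C _; rewrite andbF.
rewrite (eq_bigl (mem S)) => [|C]; last by rewrite andbT.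
by rewrite sum1_card cards2 eq_sym porbit_pairing_neq.
Qed.

Definition half_type := sort geq [seq #|a| %/ 2 | a : {set T} <- enum atoms].

Lemma even_atoms : {in atoms, forall a : {set T}, ~~ odd #|a|}.
Proof. by move=> _ /imsetP[x _ ->]; rewrite card_atom odd_double. Qed.

Lemma card_stable_even_partitions nu :
  #|[set P | even_setpart_halftype nu P && stable_by f P && stable_by h P]| =
  Rbar half_type nu.
Proof.
rewrite -(card_even_coarsenings nu partition_atoms even_atoms) ?perm_sort //.
apply: eq_card => P; rewrite !inE -andbA.
case Pe: (even_setpart_halftype nu P) => //=.
by rewrite stable_pairings_refines //; case/and3P: Pe.
Qed.

Lemma in_class_dblE lam : sorted geq lam -> in_class (dbl lam) g = (lam == half_type).
Proof.
have class_half_type : in_class (dbl half_type) g.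
  by apply/seq.permP=> p; rewrite count_cycle_type count_dbl count_sort.
move=> lam_sorted; apply/idP/eqP => [lam_class | ->] //.
apply: (sorted_eq geq_trans geq_anti) => //; first exact: (sort_sorted geq_total).
apply/seq.permP=> p; apply: double_inj; rewrite -!count_dbl.
by rewrite -(seq.permP lam_class) (seq.permP class_half_type).
Qed.

Lemma half_type_partition n : #|T| = n.*2 -> is_partition n half_type.
Proof.
move=> card_T; apply/and3P; split; first exact: (sort_sorted geq_total).
  rewrite all_sort; apply/allP=> _ /mapP[_ /[!mem_enum] /imsetP[x _ ->] ->].
  by rewrite half_card_atom lt0n card_porbit_neq0.
rewrite (perm_sumn (permEl (perm_sort _ _))) sumnE big_map big_enum /=.
apply/eqP/double_inj; rewrite -card_T -cardsT (card_partition partition_atoms).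
rewrite -muln2 big_distrl /=; apply: eq_bigr => a /even_atoms a_even.
by rewrite muln2 divn2 -[RHS](odd_double_half #|a|) (negbTE a_even).
Qed.

End PairingProduct.

Lemma pairing_f1 n : is_pairing (f1 n).
Proof. by apply/forallP=> -[] i; rewrite !permE /= ?ord_predK ?ordSK eqxx. Qed.

Lemma pairing_f2 n : is_pairing (f2 n).
Proof. by apply/forallP=> -[] i; rewrite !permE /= eqxx. Qed.

Lemma card_ground n : #|ground n| = n.*2.
Proof. by rewrite card_sum card_ord addnn. Qed.

Lemma uniq_seqs_upto k m : uniq (seqs_upto k m).
Proof.
elim: k => //= k IHk; rewrite allpairs_uniq ?iota_uniq ?andbT //.
  by apply/allpairsP=> -[[x s] [_ _ /=]].
by move=> [x s] [y t] _ _ /= [-> ->].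
Qed.

Lemma mem_seqs_upto k m l :
  size l <= k -> all (fun x => 0 < x <= m) l -> l \in seqs_upto k m.
Proof.
elim: k l => [|k IHk] [|x l] //=; rewrite ?inE ?eqxx // ltnS => size_l /andP[x_m l_m].
by apply/orP; right; apply: allpairs_f; rewrite ?mem_iota ?IHk.
Qed.

Lemma size_le_sumn l : all (fun x => 0 < x) l -> size l <= sumn l.
Proof. by elim: l => //= x l IHl /andP[x_gt0 /IHl]; rewrite -add1n; apply: leq_add. Qed.

Lemma mem_partitions n l : (l \in partitions n) = is_partition n l.
Proof.
rewrite mem_filter andb_idr // => /and3P[_ l_pos /eqP l_sum].
apply: mem_seqs_upto; first by rewrite -l_sum size_le_sumn.
apply/allP=> x xl; rewrite (allP l_pos x xl) -l_sum /=.
by rewrite (perm_sumn (perm_to_rem xl)) /= leq_addr.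
Qed.

Lemma uniq_partitions n : uniq (partitions n).
Proof. exact/filter_uniq/uniq_seqs_upto. Qed.

Lemma sum_in_class_partitions (T : finType) (f h : {perm T}) n (F : seq nat -> nat) :
  is_pairing f -> is_pairing h -> #|T| = n.*2 ->
  \sum_(lam <- partitions n) in_class (dbl lam) (f * h)%g * F lam = F (half_type f h).
Proof.
move=> pf ph card_T.
rewrite (eq_big_seq (fun lam => if lam == half_type f h then F lam else 0)) => [|lam].
  rewrite -big_mkcond -big_filter filter_pred1_uniq ?big_seq1 ?uniq_partitions //.
  by rewrite mem_partitions half_type_partition.
by rewrite mem_partitions mulnbl => /and3P[lam_sorted _ _]; rewrite in_class_dblE.
Qed.

Lemma card_set_sum (I : finType) (P : pred I) : #|[set i | P i]| = \sum_i P i.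
Proof.
by rewrite -sum1_card big_mkcond; apply: eq_bigr => i _; rewrite inE; case: (P i).
Qed.

Lemma LP_sum_pairings n nu rho : LP n nu rho =
  \sum_(h | is_pairing h) Rbar (half_type (f1 n) h) nu * Rbar (half_type (f2 n) h) rho.
Proof.
set S1 := fun h p1 =>
  [&& even_setpart_halftype nu p1, stable_by (f1 n) p1 & stable_by h p1].
set S2 := fun h p2 =>
  [&& even_setpart_halftype rho p2, stable_by (f2 n) p2 & stable_by h p2].
transitivity (\sum_h \sum_p1 \sum_p2 (is_pairing h * (S1 h p1 * S2 h p2))).
  rewrite /LP card_set_sum !pair_bigA; apply: eq_bigr => -[[h p1] p2] _ /=.
  rewrite /S1 /S2 !mulnb; case: is_pairing; case: (even_setpart_halftype nu p1);
  by case: (even_setpart_halftype rho p2); case: (stable_by _ p1); case: (stable_by h p1).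
rewrite [RHS]big_mkcond; apply: eq_bigr => h _; case: ifP => ph; last first.
  by rewrite big1 // => p1 _; rewrite big1.
rewrite -!card_stable_even_partitions ?pairing_f1 ?pairing_f2 // !card_set_sum.
rewrite big_distrlr; apply: eq_bigr => p1 _; apply: eq_bigr => p2 _.
by rewrite mul1n /S1 /S2 !andbA.
Qed.

Theorem proposition1 (n : nat) (nu rho : seq nat) :
  1 <= n -> is_partition n nu -> is_partition n rho ->
  LP n nu rho =
  \sum_(lam <- partitions n) \sum_(mu <- partitions n)
     (Rbar lam nu * Rbar mu rho * L n lam mu)%N.
Proof.
(* The identity holds for arbitrary [n], [nu] and [rho]. *)
move=> _ _ _; rewrite LP_sum_pairings.
transitivity (\sum_(h | is_pairing h)
    \sum_(lam <- partitions n) \sum_(mu <- partitions n)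
    in_class (dbl lam) (f1 n * h)%g * Rbar lam nu *
    (in_class (dbl mu) (f2 n * h)%g * Rbar mu rho)).
  apply: eq_bigr => h ph; rewrite -big_distrlr /=.
  by rewrite !sum_in_class_partitions ?pairing_f1 ?pairing_f2 ?card_ground.
rewrite exchange_big; apply: eq_bigr => lam _.
rewrite exchange_big; apply: eq_bigr => mu _.
rewrite /L card_set_sum big_distrr big_mkcond; apply: eq_bigr => h _ /=.
by case: is_pairing; case: in_class; case: in_class;
  rewrite /= ?muln0 ?mul0n ?muln1 ?mul1n.
Qed.
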